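(* Let $N\ge3$, let $A=(\mathbb{Z}/N\mathbb{Z})^2$ and let $I=\mathbb{Q}[A]^0$ be the augmentation ideal (degree-$0$ elements) of the group algebra $\mathbb{Q}[A]$. Let $H=A\rtimes\{\pm1\}$ act on $I\otimes I$ by $a\cdot(d_0\otimes d_1)=([a]d_0)\otimes([-a]d_1)$ for $a\in A$ and $(-1)\cdot(d_0\otimes d_1)=-(d_1\otimes d_0)$, and let $\varepsilon:H\to\{\pm1\}$ be the canonical projection. Then the multiplication map $\mu:I\otimes I\to I$, $d_0\otimes d_1\mapsto d_0d_1$, induces an isomorphism $(I\otimes I)^\varepsilon\xrightarrow{\cong}I$, where $(I\otimes I)^\varepsilon=\{x : h\cdot x=\varepsilon(h)x\ \forall h\in H\}$.
   Context: For $a\in A$, $[a]$ denotes the corresponding basis element of $\mathbb{Q}[A]$, and products are taken in the group algebra. *)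

From HB Require Import structures.
From mathcomp Require Import all_boot all_order all_algebra.
Set Implicit Arguments. Unset Strict Implicit. Unset Printing Implicit Defensive.
Import Order.TTheory GRing.Theory Num.Theory.
Local Open Scope ring_scope.

(* Group algebra Q[A] of a finite abelian group A, realized as functions A -> rat. *)
Notation QA A := {ffun A -> rat}.
Notation QAA A := {ffun (A * A)%type -> rat}.

Section GroupAlgebra.
Variable A : finZmodType.
Local Notation QA := (QA A).
Local Notation QAA := (QAA A).


Definition gbasis (a : A) : QA := [ffun x => (x == a)%:R].

Definition gmul (d0 d1 : QA) : QA :=
  [ffun c => \sum_(p : A * A | p.1 + p.2 == c) d0 p.1 * d1 p.2].

Definition augI (d : QA) : Prop := \sum_(x : A) d x = 0.

(* Q[A] (x) Q[A] realized as Q[A x A]; pure tensor d0 (x) d1 *)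
Definition tens (d0 d1 : QA) : QAA := [ffun p => d0 p.1 * d1 p.2].

Definition inII (f : QAA) : Prop :=
  exists s : seq (QA * QA),
    (forall p, p \in s -> augI p.1 /\ augI p.2) /\
    f = \sum_(p <- s) tens p.1 p.2.

(* multiplication map mu : the linear extension of d0 (x) d1 |-> d0 d1,
   written on the basis [a] (x) [b] of Q[A] (x) Q[A] *)
Definition mu (f : QAA) : QA :=
  [ffun c => \sum_(p : A * A) f p * gmul (gbasis p.1) (gbasis p.2) c].

(* H = A x| {+-1}; an element (a, s) with s = true meaning -1, acting as a o s.
   a . (d0 (x) d1) = ([a] d0) (x) ([-a] d1) ; (-1) . (d0 (x) d1) = -(d1 (x) d0) *)
Definition Hact (h : A * bool) (f : QAA) : QAA :=
  let g : QAA := if h.2 then [ffun p => - f (p.2, p.1)] else f in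
  [ffun p => g (p.1 - h.1, p.2 + h.1)].

Definition eps (h : A * bool) : rat := if h.2 then -1 else 1.

Definition inIIeps (f : QAA) : Prop :=
  inII f /\ forall h : A * bool, Hact h f = [ffun p => eps h * f p].

End GroupAlgebra.

(* A = (Z/NZ)^2 as a finite abelian group ('Z_N is Z/NZ for N >= 2) *)
Definition ZN2 (N : nat) := ('Z_N * 'Z_N)%type.
HB.instance Definition _ N := GRing.Zmodule.on (ZN2 N).
HB.instance Definition _ N := Finite.on (ZN2 N).

From HB Require Import structures.
From mathcomp Require Import all_boot all_order all_algebra.
Set Implicit Arguments. Unset Strict Implicit. Unset Printing Implicit Defensive.
Import GRing.Theory Num.Theory.
Local Open Scope ring_scope.

(* Invariance under the translations a in A says that the coefficient of
   [x] (x) [y] in an invariant tensor depends only on x + y, i.e. the tensor is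
   Psi = \sum_(x, y) psi (x + y) [x] (x) [y] for some psi : A -> Q; such a Psi is
   automatically symmetric, hence eps-invariant under -1.  It lies in I (x) I
   exactly when \sum psi = 0, because then
   Psi = \sum_(c, a) psi c ([a] - [0]) (x) ([c - a] - [-a]).
   Finally mu Psi = #|A| psi, so mu is #|A| times a bijection onto I. *)

Section GroupAlgebra.
Variable A : finZmodType.

Definition diag_tensor (psi : A -> rat) : QAA A := [ffun p => psi (p.1 + p.2)].

Lemma gbasisE (a x : A) : gbasis a x = (x == a)%:R.
Proof. by rewrite ffunE. Qed.

Lemma sum_indicator (a : A) : \sum_x (x == a)%:R = 1 :> rat.
Proof. by rewrite (bigD1 a) //= eqxx big1 ?addr0 // => x /negbTE ->. Qed.

Lemma sum_indicator_mull (x : A) (G : A -> rat) : \sum_a (x == a)%:R * G a = G x.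
Proof.
rewrite (bigD1 x) //= eqxx mul1r big1 ?addr0 // => a.
by rewrite eq_sym => /negbTE ->; rewrite mul0r.
Qed.

Lemma augI_gbasisB (a b : A) : augI (gbasis a - gbasis b).
Proof.
by rewrite /augI; under eq_bigr do rewrite !ffunE; rewrite sumrB !sum_indicator subrr.
Qed.

Lemma augI_scale (k : rat) (d : QA A) : augI d -> augI [ffun x => k * d x].
Proof.
by rewrite /augI => d0; under eq_bigr do rewrite ffunE; rewrite -mulr_sumr d0 mulr0.
Qed.

Lemma gmul_gbasis (a b : A) : gmul (gbasis a) (gbasis b) = gbasis (a + b).
Proof.
apply/ffunP => c; rewrite !ffunE big_mkcond (bigD1 (a, b)) //= !gbasisE !eqxx mulr1.
rewrite big1 ?addr0 => [|[x y]]; first by rewrite eq_sym; case: (c == a + b).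
rewrite xpair_eqE negb_and !gbasisE => /orP [] /negbTE ->.
  by rewrite mul0r; case: ifP.
by rewrite mulr0; case: ifP.
Qed.

Lemma muE (f : QAA A) (c : A) : mu f c = \sum_(p : A * A | p.1 + p.2 == c) f p.
Proof.
rewrite ffunE [RHS]big_mkcond; apply: eq_bigr => p _.
by rewrite gmul_gbasis gbasisE eq_sym; case: ifP; rewrite ?mulr1 ?mulr0.
Qed.

Lemma mu_diag_tensor (psi : A -> rat) (c : A) : mu (diag_tensor psi) c = psi c *+ #|A|.
Proof.
rewrite muE (eq_bigr (fun _ => psi c)) => [|p /eqP <-]; last by rewrite ffunE.
rewrite -(pair_big_dep xpredT (fun x y => x + y == c) (fun _ _ => psi c)) /=.
rewrite -sumr_const; apply: eq_bigr => x _.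
rewrite (big_pred1 (c - x)) // => y /=.
by rewrite -(inj_eq (addrI (- x))) addKr addrC.
Qed.

Lemma inII_sum_col (f : QAA A) (y : A) : inII f -> \sum_x f (x, y) = 0.
Proof.
case=> s [augs ->]; under eq_bigr do rewrite sum_ffunE.
rewrite exchange_big /= big_seq big1 // => p /augs [aug1 _].
by under eq_bigr do rewrite ffunE /=; rewrite -mulr_suml aug1 mul0r.
Qed.

Lemma inII_sum (I : finType) (F : I -> QA A * QA A) :
  (forall i, augI (F i).1 /\ augI (F i).2) -> inII (\sum_i tens (F i).1 (F i).2).
Proof.
move=> augF; exists (map F (index_enum I)); split; last by rewrite big_map.
by move=> p /mapP [i _ ->].
Qed.

Lemma sum_indicator_sub (c y : A) : \sum_a (y == c - a)%:R = 1 :> rat.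
Proof.
rewrite -[RHS](sum_indicator (c - y)); apply: eq_bigr => a _.
by rewrite eq_sym subr_eq [a == _]eq_sym subr_eq addrC.
Qed.

Lemma sum_shifted_differences (c x y : A) :
  \sum_a (gbasis a - gbasis 0) x * (gbasis (c - a) - gbasis (- a)) y
  = (x + y == c)%:R - (x + y == 0)%:R.
Proof.
under eq_bigr do rewrite !ffunE mulrBl.
rewrite sumrB sum_indicator_mull -mulr_sumr sumrB sum_indicator_sub.
under [X in _ * (_ - X)]eq_bigr do rewrite -sub0r.
rewrite sum_indicator_sub subrr mulr0 subr0.
have eq_sub c' : (y == c' - x) = (x + y == c') by rewrite eq_sym subr_eq addrC eq_sym.
by rewrite eq_sub -[- x]sub0r eq_sub.
Qed.

Lemma inII_diag_tensor (psi : A -> rat) : \sum_c psi c = 0 -> inII (diag_tensor psi).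
Proof.
move=> psi0.
pose F (q : A * A) := ([ffun x => psi q.1 * (gbasis q.2 - gbasis 0) x],
                       gbasis (q.1 - q.2) - gbasis (- q.2)).
suff -> : diag_tensor psi = \sum_q tens (F q).1 (F q).2.
  by apply: inII_sum => q; split; [apply/augI_scale |]; apply: augI_gbasisB.
apply/ffunP => -[x y]; rewrite sum_ffunE ffunE /=.
rewrite -(pair_bigA _ (fun c a => (tens (F (c, a)).1 (F (c, a)).2) (x, y))) /=.
under eq_bigr => c _.
  under eq_bigr do rewrite ffunE /= [[ffun _ => _] x]ffunE -mulrA.
  rewrite -mulr_sumr sum_shifted_differences mulrC mulrBl.
  over.
by rewrite sumrB sum_indicator_mull -mulr_sumr psi0 mulr0 subr0.
Qed.

Lemma Hact_diag_tensor (psi : A -> rat) (h : A * bool) :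
  Hact h (diag_tensor psi) = [ffun p => eps h * diag_tensor psi p].
Proof.
case: h => a []; apply/ffunP => p; rewrite !ffunE /eps /=.
  by rewrite mulN1r addrC [p.2 + a]addrC addrA subrK.
by rewrite mul1r [p.2 + a]addrC addrA subrK.
Qed.

Lemma inIIepsP (f : QAA A) :
  inIIeps f <-> exists2 psi, \sum_c psi c = 0 & f = diag_tensor psi.
Proof.
split=> [[fII finv] | [psi psi0 ->]]; last first.
  by split; [apply: inII_diag_tensor | apply: Hact_diag_tensor].
exists (fun c => f (c, 0)); first exact: inII_sum_col.
apply/ffunP => -[x y]; rewrite ffunE /=.
have := congr1 (fun g : QAA A => g (x + y, 0)) (finv (y, false)).
by rewrite !ffunE /eps /= mul1r addrK add0r.
Qed.

Lemma natr_card_neq0 : (#|A|%:R : rat) != 0.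
Proof. by rewrite pnatr_eq0 -lt0n; apply/card_gt0P; exists 0. Qed.

Lemma augI_mu (f : QAA A) : inIIeps f -> augI (mu f).
Proof.
case/inIIepsP => psi psi0 ->; rewrite /augI.
by under eq_bigr do rewrite mu_diag_tensor; rewrite sumrMnl psi0 mul0rn.
Qed.

Lemma mu_inIIeps_inj (f g : QAA A) : inIIeps f -> inIIeps g -> mu f = mu g -> f = g.
Proof.
case/inIIepsP => psi _ ->; case/inIIepsP => phi _ -> /ffunP mu_eq.
apply/ffunP => p; rewrite !ffunE; apply: (mulIf natr_card_neq0).
by have := mu_eq (p.1 + p.2); rewrite !mu_diag_tensor !mulr_natr.
Qed.

Lemma mu_inIIeps_surj (d : QA A) : augI d -> exists f, inIIeps f /\ mu f = d.
Proof.
move=> d0; pose psi c := d c / #|A|%:R.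
have psi0 : \sum_c psi c = 0 by rewrite -mulr_suml d0 mul0r.
exists (diag_tensor psi); split; first by apply/inIIepsP; exists psi.
apply/ffunP => c; rewrite mu_diag_tensor -mulr_natr divfK //; exact: natr_card_neq0.
Qed.

End GroupAlgebra.

Theorem lemma5p10 (N : nat) (hN : (3 <= N)%N) :
    (forall f : QAA (ZN2 N), inIIeps f -> augI (mu f)) /\
  (forall f g : QAA (ZN2 N), inIIeps f -> inIIeps g -> mu f = mu g -> f = g) /\
  (forall d : QA (ZN2 N), augI d -> exists f : QAA (ZN2 N), inIIeps f /\ mu f = d).
Proof.
split; [exact: augI_mu | split; [exact: mu_inIIeps_inj | exact: mu_inIIeps_surj]].
Qed.
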